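(* Let $G^1=(V,A)$ be a directed graph, in which no two arcs join the same pair of vertices (in either direction) and there are no loops, with capacities $c\colon A\to\mathbb{Z}_{>0}$, distinct vertices $s,t$, and an integer $R\ge 0$. Let $G^2$ be the underlying undirected graph of $G^1$, where the edge $uv$ coming from arc $(u,v)$ gets weight $w(uv)=c(u,v)/2$. For each $v\in V$ let $\beta_v$ be the sum of $c(a)$ over all arcs $a$ of $G^1$ directed into $v$, and set $d_v=\beta_v/2$ for $v\notin\{s,t\}$, $d_s=R/2+\beta_s/2$, $d_t=-R/2+\beta_t/2$. Then there is an all-or-nothing $s$-$t$-flow in $G^1$ of value $R$ (a flow $f$ with $f(a)\in\{0,c(a)\}$ for every arc $a$) if and only if there is an orientation of $G^2$ in which, for every vertex $v$, the total weight of the edges directed out of $v$ equals $d_v$.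
   Context: An $s$-$t$-flow in a directed graph with capacities $c$ is a function $f\colon A\to\mathbb{Z}_{\ge0}$ with $0\le f(a)\le c(a)$ for all arcs and flow conservation (inflow equals outflow) at every vertex other than $s,t$; its value is the outflow of $s$ minus the inflow of $s$. An orientation of an undirected graph chooses a direction for each edge. *)

From mathcomp Require Import all_boot all_order all_algebra.
Set Implicit Arguments. Unset Strict Implicit. Unset Printing Implicit Defensive.
Import Order.TTheory GRing.Theory Num.Theory.
From mathcomp Require Import rat.
Local Open Scope ring_scope.

(* Capacities are a
   function [c : V -> V -> nat], relevant only on arcs. *)

Definition simple_digraph (V : finType) (arc : rel V) : Prop :=
  (forall v, ~~ arc v v) /\ (forall u v, arc u v -> ~~ arc v u).

Definition inflow (V : finType) (arc : rel V) (g : V -> V -> nat) (v : V) : nat :=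
  (\sum_(u | arc u v) g u v)%N.
Definition outflow (V : finType) (arc : rel V) (g : V -> V -> nat) (v : V) : nat :=
  (\sum_(u | arc v u) g v u)%N.

Definition is_flow (V : finType) (arc : rel V) (c : V -> V -> nat) (s t : V)
    (f : V -> V -> nat) : Prop :=
  (forall u v, arc u v -> (f u v <= c u v)%N) /\
  (forall v, v != s -> v != t -> inflow arc f v = outflow arc f v).

Definition flow_value (V : finType) (arc : rel V) (f : V -> V -> nat) (s : V) : int :=
  (outflow arc f s)%:Z - (inflow arc f s)%:Z.

Definition all_or_nothing (V : finType) (arc : rel V) (c : V -> V -> nat)
    (f : V -> V -> nat) : Prop :=
  forall u v, arc u v -> f u v = 0%N \/ f u v = c u v.

Definition uedge (V : finType) (arc : rel V) : rel V :=
  fun u v => arc u v || arc v u.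

Definition uweight (V : finType) (arc : rel V) (c : V -> V -> nat) (u v : V) : rat :=
  if arc u v then (c u v)%:R / 2%:R else (c v u)%:R / 2%:R.

Definition is_orientation (V : finType) (arc : rel V) (D : rel V) : Prop :=
  (forall u v, D u v -> uedge arc u v) /\
  (forall u v, uedge arc u v -> D u v = ~~ D v u).

Definition out_weight (V : finType) (arc : rel V) (c : V -> V -> nat) (D : rel V)
    (v : V) : rat :=
  \sum_(u | D v u) uweight arc c v u.

Definition beta (V : finType) (arc : rel V) (c : V -> V -> nat) (v : V) : nat :=
  (\sum_(u | arc u v) c u v)%N.

Definition demand (V : finType) (arc : rel V) (c : V -> V -> nat) (s t : V) (R : nat)
    (v : V) : rat :=
  if v == s then (R%:R / 2%:R + (beta arc c v)%:R / 2%:R)%R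
  else if v == t then (- (R%:R / 2%:R) + (beta arc c v)%:R / 2%:R)%R
  else ((beta arc c v)%:R / 2%:R)%R.

From mathcomp Require Import all_boot all_order all_algebra.
Import Order.TTheory GRing.Theory Num.Theory.
Set Implicit Arguments. Unset Strict Implicit. Unset Printing Implicit Defensive.
Local Open Scope ring_scope.

(* All-or-nothing flows correspond to orientations of G^2: an arc is saturated
   iff its edge is oriented along it.  An edge leaving v then contributes
   c(a)/2 to the out-weight of v, where c(a) equals f(a) if a leaves v and
   c(a) - f(a) if a enters v; hence 2 out_weight(v) = outflow(v) - inflow(v)
   + beta_v.  As 2 d_v = beta_v + (R at s, -R at t, 0 elsewhere), the
   orientation meets the demands iff f has this net-outflow profile, i.e. is an
   s-t-flow of value R (the value -R at t is forced, since net outflows sum to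
   zero). *)

Section AllOrNothingOrientation.

Variables (V : finType) (arc : rel V) (c : V -> V -> nat).

Definition net_out (f : V -> V -> nat) (v : V) : rat :=
  (outflow arc f v)%:R - (inflow arc f v)%:R.

Definition st_excess (s t : V) (R : nat) (v : V) : rat :=
  if v == s then R%:R else if v == t then - R%:R else 0.

Definition flow_of_orientation (D : rel V) (u v : V) : nat :=
  if D u v then c u v else 0%N.

Lemma sum_net_out (f : V -> V -> nat) : \sum_v net_out f v = 0.
Proof.
rewrite sumrB -!natr_sum; apply/eqP; rewrite subr_eq0 eqr_nat; apply/eqP.
rewrite /outflow /inflow.
under eq_bigr do rewrite big_mkcond.
under [RHS]eq_bigr do rewrite big_mkcond.
by rewrite [RHS]exchange_big.
Qed.

Lemma net_out_eq_st_excess (f : V -> V -> nat) (s t : V) (R : nat) :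
  s != t ->
  (forall v, net_out f v = st_excess s t R v) <->
  (forall v, v != s -> v != t -> inflow arc f v = outflow arc f v)
    /\ flow_value arc f s = R%:Z.
Proof.
move=> st; split=> [net | [cons value] v].
  split=> [v vs vt | ].
    have /eqP := net v; rewrite /st_excess (negbTE vs) (negbTE vt).
    by rewrite subr_eq0 eqr_nat => /eqP.
  apply: (@intr_inj rat); rewrite rmorphB /=.
  by have := net s; rewrite /st_excess eqxx.
have net0 w : w != s -> w != t -> net_out f w = 0.
  by move=> ws wt; rewrite /net_out cons // subrr.
have net_s : net_out f s = R%:R.
  by move: value => /(congr1 (fun z : int => z%:~R : rat)); rewrite rmorphB.
rewrite /st_excess; case: (eqVneq v s) => [-> // | vs].
case: (eqVneq v t) => [-> | vt]; last exact: net0.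
have := sum_net_out f; rewrite (bigD1 s) //= (bigD1 t) 1?eq_sym //= big1; last first.
  by move=> w /andP[]; apply: net0.
by rewrite net_s addr0 addrC => /eqP; rewrite addr_eq0 => /eqP.
Qed.

Hypothesis arc_simple : simple_digraph arc.

Lemma aon_flow_orientation (f : V -> V -> nat) :
  all_or_nothing arc c f ->
  exists2 D : rel V, is_orientation arc D &
    forall u v, arc u v -> f u v = flow_of_orientation D u v.
Proof.
move=> aon; have asym := proj2 arc_simple.
pose D : rel V := fun u v => arc u v && (f u v != 0%N) || arc v u && (f v u == 0%N).
have D_arc u v : arc u v -> D u v = (f u v != 0%N).
  by move=> uv; rewrite /D uv (negbTE (asym _ _ uv)) orbF.
have D_rev u v : arc u v -> D v u = (f u v == 0%N).
  by move=> uv; rewrite /D uv (negbTE (asym _ _ uv)).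
exists D; first split.
- by move=> u v /orP[/andP[uv _] | /andP[vu _]]; rewrite /uedge ?uv ?vu ?orbT.
- move=> u v /orP[] e; first by rewrite D_arc // D_rev.
  by rewrite D_rev // D_arc // negbK.
move=> u v uv; rewrite /flow_of_orientation D_arc //.
by case: (aon _ _ uv) => ->; rewrite ?eqxx //; case: (c u v).
Qed.

Lemma double_out_weight (D : rel V) (f : V -> V -> nat) (v : V) :
  is_orientation arc D ->
  (forall u w, arc u w -> f u w = flow_of_orientation D u w) ->
  2%:R * out_weight arc c D v = net_out f v + (beta arc c v)%:R.
Proof.
case: arc_simple => _ asym [D_edge D_antisym] fD.
rewrite /out_weight /net_out /outflow /inflow /beta !natr_sum mulr_sumr.
rewrite addrAC (big_mkcond (D v)) (big_mkcond (arc v)) !(big_mkcond (arc^~ v)).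
rewrite -big_split -sumrB /=; apply: eq_bigr => u _.
have half_cap a : 2%:R * (a%:R / 2%:R) = a%:R :> rat by rewrite mulrC divfK ?pnatr_eq0.
rewrite /uweight /flow_of_orientation in fD *.
case: (boolP (arc v u)) => vu.
  rewrite (negbTE (asym _ _ vu)) fD //.
  by case: (D v u); rewrite ?mulr0 ?half_cap subr0 addr0.
case: (boolP (arc u v)) => uv.
  rewrite fD // (D_antisym u v) ?/uedge ?uv //.
  by case: (D v u); rewrite ?half_cap add0r ?subr0 ?subrr.
case: (boolP (D v u)) => [/D_edge | _]; last by rewrite addr0 subr0.
by rewrite /uedge (negbTE vu) (negbTE uv).
Qed.

Lemma double_demand (s t : V) (R : nat) (v : V) :
  2%:R * demand arc c s t R v = st_excess s t R v + (beta arc c v)%:R.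
Proof.
have half a : 2%:R * (a / 2%:R) = a :> rat by rewrite mulrC divfK ?pnatr_eq0.
by rewrite /demand /st_excess; case: (v == s); [|case: (v == t)];
  rewrite ?mulrDr ?half ?mulrN ?half ?add0r.
Qed.

Lemma out_weight_demand_net_out (D : rel V) (f : V -> V -> nat) (s t : V) (R : nat) :
  is_orientation arc D ->
  (forall u w, arc u w -> f u w = flow_of_orientation D u w) ->
  (forall v, out_weight arc c D v = demand arc c s t R v) <->
  (forall v, net_out f v = st_excess s t R v).
Proof.
move=> orD fD; have two_neq0 : (2%:R : rat) != 0 by rewrite pnatr_eq0.
split=> eq_w v.
  apply: (addIr (beta arc c v)%:R).
  by rewrite -(double_out_weight v orD fD) eq_w double_demand.
by apply: (mulfI two_neq0); rewrite (double_out_weight v orD fD) eq_w double_demand.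
Qed.

End AllOrNothingOrientation.

Theorem mainTheorem2 (V : finType) (arc : rel V) (c : V -> V -> nat) (s t : V) (R : nat)
  (Hsimple : simple_digraph arc)
  (Hcap : forall u v, arc u v -> (0 < c u v)%N)
  (Hst : s != t) :
  (exists f : V -> V -> nat,
      is_flow arc c s t f /\ all_or_nothing arc c f /\ flow_value arc f s = R%:Z)
  <->
  (exists D : rel V,
      is_orientation arc D /\ forall v, out_weight arc c D v = demand arc c s t R v).
Proof.
split=> [[f [[_ cons] [aon value]]] | [D [orD weights]]].
  have [D orD fD] := aon_flow_orientation Hsimple aon.
  exists D; split=> //.
  apply/(out_weight_demand_net_out Hsimple _ _ _ orD fD).
  by apply/(net_out_eq_st_excess _ _ _ Hst).
have fD : forall u v, arc u v ->
  flow_of_orientation c D u v = flow_of_orientation c D u v by [].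
have [cons value] := (net_out_eq_st_excess _ _ _ Hst).1
  ((out_weight_demand_net_out Hsimple _ _ _ orD fD).1 weights).
exists (flow_of_orientation c D); split; [split=> // | split=> //].
- by move=> u v _; rewrite /flow_of_orientation; case: (D u v).
- by move=> u v _; rewrite /flow_of_orientation; case: (D u v); [right | left].
Qed.
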